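(* Let $m\ge2$ and let $\mathbf v=(v_1,\dots,v_m)$ and $\mathbf k=(k_1,\dots,k_m)$ be $m$-tuples of positive integers with $k_i\le v_i$ for all $i$ and $k_1\ge2$, $k_2\ge2$. Let $\mathcal D$ be a ${\rm GC}(\mathbf v,\mathbf k,2)$ on pairwise disjoint point sets $X_1,\dots,X_m$, and put $\mathbf v^+=(v_1+v_2,v_3,\dots,v_m)$ and $\mathbf k^+=(k_1+k_2,k_3,\dots,k_m)$. For each block $\mathbf B=(B_1,\dots,B_m)\in\mathcal D$ let $\mathbf B^+=(B_1\cup B_2,B_3,\dots,B_m)$, and let $\mathcal D^+=\{\mathbf B^+:\mathbf B\in\mathcal D\}$ (as a family indexed by $\mathcal D$). Then $\mathcal D^+$ is a ${\rm GC}(\mathbf v^+,\mathbf k^+,2)$ on the point sets $(X_1\cup X_2,X_3,\dots,X_m)$, and consequently $C(\mathbf v^+,\mathbf k^+,2)\le C(\mathbf v,\mathbf k,2)$.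
   Context: For tuples $\mathbf a,\mathbf b$ of positive integers of the same length $p$ with $\mathbf b\le\mathbf a$ entrywise, and pairwise disjoint sets $Y_1,\dots,Y_p$ with $|Y_i|=a_i$: a block is a $p$-tuple $(B_1,\dots,B_p)$ with $B_i\subseteq Y_i$, $|B_i|=b_i$; a $p$-tuple of sets $(T_1,\dots,T_p)$ is $(\mathbf a,\mathbf b,2)$-admissible if $T_i\subseteq Y_i$, $|T_i|\le b_i$ and $\sum|T_i|=2$, and is contained in a block if $T_i\subseteq B_i$ for all $i$. A ${\rm GC}(\mathbf a,\mathbf b,2)$ is a finite family (repetitions allowed) of blocks containing every admissible tuple in at least one block; $C(\mathbf a,\mathbf b,2)$ is the minimum number of blocks. *)

(* Tuples are represented as sequences; the i-th coordinate
   (0-based) of a tuple s is nth _ s i. *)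
From mathcomp Require Import all_boot.
Set Implicit Arguments. Unset Strict Implicit. Unset Printing Implicit Defensive.

Section GC.
Variable T : finType.

Definition point_sets (a : seq nat) (Y : seq {set T}) : Prop :=
  size Y = size a /\
  (forall i, i < size Y -> #|nth set0 Y i| = nth 0 a i) /\
  (forall i j, i < size Y -> j < size Y -> i != j ->
     [disjoint nth set0 Y i & nth set0 Y j]).

Definition is_block (Y : seq {set T}) (b : seq nat) (B : seq {set T}) : Prop :=
  size B = size Y /\
  forall i, i < size Y -> nth set0 B i \subset nth set0 Y i /\
                          #|nth set0 B i| = nth 0 b i.

Definition admissible2 (Y : seq {set T}) (b : seq nat) (U : seq {set T}) : Prop :=
  size U = size Y /\
  (forall i, i < size Y -> nth set0 U i \subset nth set0 Y i /\
                           #|nth set0 U i| <= nth 0 b i) /\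
  sumn [seq #|Z| | Z : {set T} <- U] = 2.

Definition contained_in (U B : seq {set T}) : Prop :=
  forall i, i < size U -> nth set0 U i \subset nth set0 B i.

(* D is a GC(a,b,2) on the point sets Y (a family with repetitions = a seq) *)
Definition is_GC (Y : seq {set T}) (b : seq nat) (D : seq (seq {set T})) : Prop :=
  size b = size Y /\
  (forall B, B \in D -> is_block Y b B) /\
  (forall U, admissible2 Y b U -> exists2 B, B \in D & contained_in U B).

End GC.

Definition is_C (a b : seq nat) (n : nat) : Prop :=
  (exists (T : finType) (Y : seq {set T}) (D : seq (seq {set T})),
      [/\ point_sets a Y, is_GC Y b D & size D = n]) /\
  (forall (T : finType) (Y : seq {set T}) (D : seq (seq {set T})),
      point_sets a Y -> is_GC Y b D -> n <= size D).

Definition plusN (s : seq nat) : seq nat :=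
  match s with x :: y :: r => (x + y) :: r | _ => s end.

Definition plusS (T : finType) (s : seq {set T}) : seq {set T} :=
  match s with x :: y :: r => (x :|: y) :: r | _ => s end.

(* Merging the first two coordinates keeps blocks blocks, since X_1 and X_2 are
   disjoint and so |B_1 ∪ B_2| = k_1 + k_2.  Conversely, a merged admissible
   tuple (U, U_3, ..., U_m) with U ⊆ X_1 ∪ X_2 splits back into the admissible
   tuple (U ∩ X_1, U ∩ X_2, U_3, ..., U_m): its first two parts have at most
   |U| <= 2 <= k_1, k_2 points.  A block covering the split tuple covers U after
   merging.  Applying the construction to an optimal design gives the bound on C. *)
From mathcomp Require Import all_boot.
From mathcomp Require Import zify.

Set Implicit Arguments.
Unset Strict Implicit.
Unset Printing Implicit Defensive.

Section MergeFirstTwo.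
Variable T : finType.
Implicit Types (x y U : {set T}) (r rU B : seq {set T}).

Lemma cardsU_disjoint (A B : {set T}) :
  [disjoint A & B] -> #|A :|: B| = #|A| + #|B|.
Proof. by move=> dAB; apply/eqP; rewrite (leq_card_setU A B). Qed.

Lemma disjoint_setUl (A B C : {set T}) :
  [disjoint A & C] -> [disjoint B & C] -> [disjoint A :|: B & C].
Proof. by rewrite -!setI_eq0 setIUl => /eqP -> /eqP ->; rewrite setU0. Qed.

Lemma point_sets_plusS a b rv x y r :
  point_sets [:: a, b & rv] [:: x, y & r] ->
  point_sets (plusN [:: a, b & rv]) (plusS [:: x, y & r]).
Proof.
move=> [/= [size_r] [card_X disj_X]]; split; first by rewrite /= size_r.
have disj_xy_r j : j < size r -> [disjoint x :|: y & nth set0 r j].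
  by move=> lt_j; apply: disjoint_setUl; [apply: (disj_X 0 j.+2) | apply: (disj_X 1 j.+2)].
split.
  case=> [|i] /= lt_i; last exact: (card_X i.+2).
  by rewrite cardsU_disjoint ?(card_X 0) ?(card_X 1) //; apply: (disj_X 0 1).
case=> [|i] [|j] //= lt_i lt_j neq_ij.
- exact: disj_xy_r.
- by rewrite disjoint_sym; apply: disj_xy_r.
- exact: (disj_X i.+2 j.+2).
Qed.

Lemma is_block_plusS x y r c d rk B :
  [disjoint x & y] -> is_block [:: x, y & r] [:: c, d & rk] B ->
  is_block (plusS [:: x, y & r]) (plusN [:: c, d & rk]) (plusS B).
Proof.
case: B => [|B1 [|B2 rB]] disj_xy [//= [size_rB] block_B] //.
split; first by rewrite /= size_rB.
case=> [|i] /= lt_i; last exact: (block_B i.+2).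
have [sub_B1 card_B1] := block_B 0 isT; have [sub_B2 card_B2] := block_B 1 isT.
split; first exact: setUSS.
rewrite cardsU_disjoint ?card_B1 ?card_B2 //.
exact: disjointWl sub_B1 (disjointWr sub_B2 disj_xy).
Qed.

Lemma admissible2_split x y r c d rk U rU :
  [disjoint x & y] -> 2 <= c -> 2 <= d ->
  admissible2 (plusS [:: x, y & r]) (plusN [:: c, d & rk]) (U :: rU) ->
  admissible2 [:: x, y & r] [:: c, d & rk] [:: U :&: x, U :&: y & rU].
Proof.
move=> disj_xy le2c le2d [/= [size_rU] [adm_U sum_U]].
have [sub_U _] := adm_U 0 isT.
have split_U : U = (U :&: x) :|: (U :&: y) by rewrite -setIUr; apply/esym/setIidPl.
have disj_parts : [disjoint U :&: x & U :&: y].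
  by apply: disjointWl (subsetIr U x) (disjointWr (subsetIr U y) disj_xy).
have card_U : #|U :&: x| + #|U :&: y| <= 2.
  by rewrite -cardsU_disjoint // -split_U; move: sum_U => /=; lia.
split; first by rewrite /= size_rU.
split; last by rewrite /= addnA -cardsU_disjoint // -split_U.
case=> [|[|i]] /= lt_i; last exact: (adm_U i.+1).
- by rewrite subsetIr; split=> //; lia.
- by rewrite subsetIr; split=> //; lia.
Qed.

Lemma nth_plusS0 B :
  nth set0 (plusS B) 0 = nth set0 B 0 :|: nth set0 B 1.
Proof. by case: B => [|B1 [|B2 rB]] /=; rewrite ?setU0. Qed.

Lemma nth_plusS B i : nth set0 (plusS B) i.+1 = nth set0 B i.+2.
Proof. by case: B => [|B1 [|B2 rB]] /=; rewrite ?nth_nil. Qed.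

Lemma contained_in_plusS x y U rU B :
  U \subset x :|: y -> contained_in [:: U :&: x, U :&: y & rU] B ->
  contained_in (U :: rU) (plusS B).
Proof.
move=> sub_U cont_B [|i] /= lt_i; last by rewrite nth_plusS; apply: (cont_B i.+2).
rewrite nth_plusS0 -(setIidPl sub_U) setIUr.
by apply: setUSS; [apply: (cont_B 0) | apply: (cont_B 1)].
Qed.

Lemma is_GC_plusS a b rv x y r c d rk D :
  2 <= c -> 2 <= d ->
  point_sets [:: a, b & rv] [:: x, y & r] -> is_GC [:: x, y & r] [:: c, d & rk] D ->
  is_GC (plusS [:: x, y & r]) (plusN [:: c, d & rk]) [seq plusS B | B <- D].
Proof.
move=> le2c le2d [_ [_ disj_X]] [/= [size_rk] [block_D cover_D]].
have disj_xy : [disjoint x & y] by apply: (disj_X 0 1).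
split; first by rewrite /= size_rk.
split; first by move=> _ /mapP[B D_B ->]; apply: is_block_plusS (block_D B D_B).
case=> [|U rU] adm_U; first by case: adm_U.
have [sub_U _] := adm_U.2.1 0 isT.
have [B D_B cont_B] := cover_D _ (admissible2_split disj_xy le2c le2d adm_U).
by exists (plusS B); [apply: map_f | apply: contained_in_plusS sub_U cont_B].
Qed.

Lemma plusS_GC v k X D :
  2 <= size v -> size k = size v -> 2 <= nth 0 k 0 -> 2 <= nth 0 k 1 ->
  point_sets v X -> is_GC X k D ->
  point_sets (plusN v) (plusS X) /\ is_GC (plusS X) (plusN k) [seq plusS B | B <- D].
Proof.
case: v => [|a [|b rv]] // _; case: k => [|c [|d rk]] // _ le2c le2d X_v.
have [size_X _] := X_v.
case: X size_X X_v => [|x [|y r]] // _ X_v GC_D.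
by split; [apply: point_sets_plusS | apply: is_GC_plusS le2c le2d X_v GC_D].
Qed.

End MergeFirstTwo.

Lemma is_C_plusN_le v k n n' :
  2 <= size v -> size k = size v -> 2 <= nth 0 k 0 -> 2 <= nth 0 k 1 ->
  is_C v k n -> is_C (plusN v) (plusN k) n' -> n' <= n.
Proof.
move=> size_v size_k le2k0 le2k1 [[T [X [D [X_v GC_D <-]]]] _] [_ min_n'].
have [X_v' GC_D'] := plusS_GC size_v size_k le2k0 le2k1 X_v GC_D.
by rewrite -(size_map (@plusS T)); apply: min_n' GC_D'.
Qed.

Theorem proposition3p22 (m : nat) (v k : seq nat) (T : finType)
    (X : seq {set T}) (D : seq (seq {set T})) :
  2 <= m -> size v = m -> size k = m ->
  (forall i, i < m -> 0 < nth 0 k i) ->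
  (forall i, i < m -> nth 0 k i <= nth 0 v i) ->
  2 <= nth 0 k 0 -> 2 <= nth 0 k 1 ->
  point_sets v X -> is_GC X k D ->
  [/\ point_sets (plusN v) (plusS X),
      is_GC (plusS X) (plusN k) [seq plusS B | B <- D]
    & forall n n', is_C v k n -> is_C (plusN v) (plusN k) n' -> n' <= n].
Proof.
move=> le2m size_v size_k _ _ le2k0 le2k1 X_v GC_D; subst m.
have [X_v' GC_D'] := plusS_GC le2m size_k le2k0 le2k1 X_v GC_D.
by split=> // n n'; apply: is_C_plusN_le.
Qed.
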